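(* For all $k\in\mathbb{N}$, the vector $c^{(k)}\in\mathbb{R}^{2^k-1}$ satisfies $\sum_{j} c^{(k)}_j=2(\rho^k-1)$ and $c^{(k)}\ge\pi^{(k)}$ entrywise.
   Context: $\rho=1+\sqrt{2}$. The silver stepsizes are $\alpha_t=\rho^{\nu(t+1)-1}+1$ for $t\ge0$, where $\nu(i)$ is the largest integer $j$ with $2^j\mid i$. For $k\in\mathbb{N}$ and $n=2^k-1$, $\pi^{(k)}=[\alpha_0,\dots,\alpha_{n-1}]\in\mathbb{R}^n$ (so $\pi^{(k+1)}=[\pi^{(k)},\rho^{k-1}+1,\pi^{(k)}]$ and $\sum\pi^{(k)}=\rho^k-1$). The sequence $c^{(k)}\in\mathbb{R}^n$ is defined recursively by $c^{(1)}=[2(\rho-1)]$ and $c^{(k+1)}=\big[\pi^{(k)},\ (1+\rho^{-k})(\rho^{k-1}+1),\ \rho c^{(k)}-(\rho-1-\rho^{-k})\pi^{(k)}\big]$ (concatenation). *)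

From HB Require Import structures.
From mathcomp Require Import all_boot all_order all_algebra.
From mathcomp Require Import reals.
Set Implicit Arguments. Unset Strict Implicit. Unset Printing Implicit Defensive.
Import Order.TTheory GRing.Theory Num.Theory.
Local Open Scope ring_scope.

Section Silver.
Variable R : realType.

Definition rho : R := 1 + Num.sqrt 2.

Definition nu (i : nat) : nat := logn 2 i.

Definition alpha (t : nat) : R := rho ^ ((nu t.+1)%:Z - 1) + 1.

Definition pi_seq (k : nat) : seq R := [seq alpha t | t <- iota 0 (2 ^ k - 1)].

(* c^(1) = [2(rho-1)],
   c^(k+1) = [pi^(k), (1+rho^-k)(rho^(k-1)+1), rho c^(k) - (rho-1-rho^-k) pi^(k)].
   c 0 is a junk value (c^(0) is not defined in the paper). *)
Fixpoint c_seq (k : nat) : seq R :=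
  match k with
  | 0 => [::]
  | k'.+1 =>
    if k' == 0%N then [:: 2 * (rho - 1)]
    else pi_seq k' ++ (1 + rho ^- k') * (rho ^+ k'.-1 + 1)
           :: [seq rho * xy.1 - (rho - 1 - rho ^- k') * xy.2
              | xy <- zip (c_seq k') (pi_seq k')]
  end.

End Silver.

From HB Require Import structures.
From mathcomp Require Import all_boot all_order all_algebra.
From mathcomp Require Import reals.
From mathcomp Require Import ring lra zify.
Import Order.TTheory GRing.Theory Num.Theory.
Local Open Scope ring_scope.

(* The sequences satisfy [pi^(k+1) = [pi^(k), rho^(k-1) + 1, pi^(k)]], so
   [sum pi^(k) = rho^k - 1] follows from [rho^2 = 2 rho + 1].  Comparing the
   three blocks of [c^(k+1)] with those of [pi^(k+1)]: the first blocks agree,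
   the middle entry exceeds [rho^(k-1) + 1] by the factor [1 + rho^-k], and on
   the last block [rho c - (rho - 1 - rho^-k) pi - pi = rho (c - pi) + rho^-k pi],
   which is nonnegative by induction since [pi > 0].  The sum of [c^(k+1)] is
   computed from those of [c^(k)] and [pi^(k)] using also [rho^-1 = rho - 2]. *)

Lemma lognD_pfactor p k m : prime p -> (0 < m < p ^ k)%N ->
  logn p (p ^ k + m) = logn p m.
Proof.
move=> p_pr /andP[m_gt0 m_lt]; set j := logn p m.
have pj_dvd : (p ^ j %| m)%N := pfactor_dvdnn p m.
have j_lt_k : (j < k)%N.
  rewrite -(ltn_exp2l _ _ (prime_gt1 p_pr)).
  exact: leq_ltn_trans (dvdn_leq m_gt0 pj_dvd) m_lt.
have sum_gt0 : (0 < p ^ k + m)%N by rewrite addn_gt0 m_gt0 orbT.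
apply/eqP; rewrite eqn_leq leqNgt -!(pfactor_dvdn _ _ sum_gt0) //.
rewrite !dvdn_addr ?dvdn_exp2l ?(ltnW j_lt_k) // pj_dvd andbT.
by rewrite (pfactor_dvdn _ _ m_gt0) // ltnn.
Qed.

Lemma sum_zip_lin (R : pzRingType) (a b : R) (s t : seq R) : size s = size t ->
  \sum_(xy <- zip s t) (a * xy.1 - b * xy.2) =
  a * \sum_(x <- s) x - b * \sum_(x <- t) x.
Proof.
move=> eq_st; rewrite big_split sumrN /= -!mulr_sumr.
rewrite -[in RHS](unzip1_zip (eq_leq eq_st)) big_map.
by rewrite -[in X in _ = _ - _ * X](unzip2_zip (eq_leq (esym eq_st))) big_map.
Qed.

Lemma ler_nth_cat_cons (R : numDomainType) (s1 s2 t1 t2 : seq R) (x y : R) :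
    size s1 = size s2 ->
    (forall j, nth 0 s1 j <= nth 0 s2 j) -> x <= y ->
    (forall j, nth 0 t1 j <= nth 0 t2 j) ->
  forall j, nth 0 (s1 ++ x :: t1) j <= nth 0 (s2 ++ y :: t2) j.
Proof.
move=> eq_s le_s le_xy le_t j; rewrite !nth_cat eq_s.
by case: ifP => // _; case: (_ - _)%N.
Qed.

Section Silver.
Variable R : realType.
Local Notation rho := (rho R).
Local Notation pi_seq := (pi_seq R).
Local Notation c_seq := (c_seq R).

Lemma rho_ge2 : 2 <= rho.
Proof.
rewrite /rho -[2 in X in X <= _]/(1 + 1) lerD2l.
by rewrite -[X in X <= _]sqrtr1 ler_sqrt //; lra.
Qed.

Lemma rho_gt0 : 0 < rho.
Proof. by have := rho_ge2; lra. Qed.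

Lemma rho_neq0 : rho != 0.
Proof. exact: lt0r_neq0 rho_gt0. Qed.

Lemma rho_sqr : rho ^+ 2 = 2 * rho + 1.
Proof.
have sqrt2_sqr := sqr_sqrtr (ler0n R 2).
by rewrite /rho sqrrD sqrt2_sqr expr1n; ring.
Qed.

Lemma rhoV : rho^-1 = rho - 2.
Proof.
apply: (mulfI rho_neq0); rewrite mulfV ?rho_neq0 //.
by rewrite mulrBr -expr2 rho_sqr; ring.
Qed.

Lemma alpha_addl k t : (t.+1 < 2 ^ k)%N -> alpha R (2 ^ k + t) = alpha R t.
Proof. by move=> t_lt; rewrite /alpha /nu -addnS lognD_pfactor. Qed.

Lemma alpha_pred_expn2 k : alpha R (2 ^ k).-1 = rho ^ (k%:Z - 1) + 1.
Proof. by rewrite /alpha /nu prednK ?expn_gt0 // pfactorK. Qed.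

Lemma pi_seqS k :
  pi_seq k.+1 = pi_seq k ++ (rho ^ (k%:Z - 1) + 1) :: pi_seq k.
Proof.
have pow_gt0 : (0 < 2 ^ k)%N by rewrite expn_gt0.
rewrite /pi_seq; have -> : (2 ^ k.+1 - 1 = (2 ^ k - 1) + 1 + (2 ^ k - 1))%N.
  by rewrite expnS; lia.
rewrite !iotaD !map_cat -catA /= !add0n subnK //.
rewrite [in alpha R _]subn1 alpha_pred_expn2.
congr (_ ++ _ :: _).
rewrite -[X in iota X]addn0 iotaDl -map_comp.
apply/eq_in_map => t; rewrite mem_iota /= => t_lt.
by apply: alpha_addl; lia.
Qed.

Lemma pi_seqSS k : pi_seq k.+2 = pi_seq k.+1 ++ (rho ^+ k + 1) :: pi_seq k.+1.
Proof. by rewrite pi_seqS -addn1 PoszD addrK. Qed.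

Lemma size_pi_seq k : size (pi_seq k) = (2 ^ k - 1)%N.
Proof. by rewrite size_map size_iota. Qed.

Lemma sum_pi_seq k : \sum_(x <- pi_seq k) x = rho ^+ k - 1.
Proof.
elim: k => [|k IHk]; first by rewrite big_nil expr0 subrr.
have rho_exprE : rho ^+ k = rho ^ (k%:Z - 1) * rho.
  by rewrite -[rho in RHS]expr1z -expfzDr ?rho_neq0 // subrK.
rewrite pi_seqS big_cat big_cons /= IHk exprSr rho_exprE -mulrA -expr2 rho_sqr.
ring.
Qed.

Lemma pi_seq_gt0 k x : x \in pi_seq k -> 0 < x.
Proof.
case/mapP => t _ ->; rewrite /alpha.
by apply: ltr_wpDl; [apply/ltW/exprz_gt0/rho_gt0 | apply: ltr01].
Qed.

Lemma nth_pi_seq_ge0 k j : 0 <= nth 0 (pi_seq k) j.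
Proof.
have [j_lt|j_ge] := ltnP j (size (pi_seq k)); last by rewrite nth_default.
by apply/ltW/(@pi_seq_gt0 k); rewrite mem_nth.
Qed.

Lemma c_seqSS k : c_seq k.+2 =
  pi_seq k.+1 ++ (1 + rho ^- k.+1) * (rho ^+ k + 1) ::
  [seq rho * xy.1 - (rho - 1 - rho ^- k.+1) * xy.2
  | xy <- zip (c_seq k.+1) (pi_seq k.+1)].
Proof. by []. Qed.

Lemma size_c_seq k : size (c_seq k.+1) = (2 ^ k.+1 - 1)%N.
Proof.
elim: k => [|k IHk] //.
rewrite c_seqSS size_cat /= size_map size_zip IHk !size_pi_seq minnn.
by have := expn_gt0 2 k; rewrite !expnS; lia.
Qed.

Lemma sum_c_seq k : \sum_(x <- c_seq k.+1) x = 2 * (rho ^+ k.+1 - 1).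
Proof.
elim: k => [|k IHk]; first by rewrite big_seq1 expr1.
rewrite c_seqSS big_cat big_cons /= sum_pi_seq big_map sum_zip_lin; last first.
  by rewrite size_c_seq size_pi_seq.
set y := rho ^- k.+1; rewrite IHk sum_pi_seq !exprSr; set t := rho ^+ k.
have yt : y * t = rho - 2.
  by rewrite /y exprSr invfM mulrAC mulVf ?expf_neq0 ?rho_neq0 // mul1r rhoV.
have ytr : y * (t * rho) = 1 by rewrite /y -exprSr mulVf ?expf_neq0 ?rho_neq0.
have trr : t * (rho * rho) = t * (2 * rho + 1) by rewrite -expr2 rho_sqr.
lra.
Qed.

Lemma pi_seq_le_c_seq k j : nth 0 (pi_seq k.+1) j <= nth 0 (c_seq k.+1) j.
Proof.
elim: k j => [|k IHk] j.
  case: j => [|j]; last by rewrite !nth_default.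
  by rewrite pi_seqS /= sub0r exprN1 rhoV; have := rho_ge2; lra.
have rho_ge0 : 0 <= rho := ltW rho_gt0.
have y_ge0 : 0 <= rho ^- k.+1 by rewrite invr_ge0 exprn_ge0.
rewrite c_seqSS pi_seqSS; apply: ler_nth_cat_cons => [//|//||i].
  have alpha_ge0 : 0 <= rho ^+ k + 1 by rewrite addr_ge0 ?exprn_ge0.
  by rewrite -[X in X <= _]mul1r ler_wpM2r // lerDl.
have size_zip_c_pi : size (zip (c_seq k.+1) (pi_seq k.+1)) = size (pi_seq k.+1).
  by rewrite size_zip size_c_seq size_pi_seq minnn.
have [i_lt|i_ge] := ltnP i (size (pi_seq k.+1)); last first.
  by rewrite (nth_default _ i_ge) nth_default // size_map size_zip_c_pi.
rewrite (nth_map (0, 0)) ?size_zip_c_pi // nth_zip ?size_c_seq ?size_pi_seq //=.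
have := IHk i; have := nth_pi_seq_ge0 k.+1 i.
set p := nth 0 _ i; set c := nth 0 _ i => p_ge0 p_le_c.
have -> : rho * c - (rho - 1 - rho ^- k.+1) * p =
          p + (rho * (c - p) + rho ^- k.+1 * p) by ring.
by rewrite lerDl addr_ge0 ?mulr_ge0 ?subr_ge0.
Qed.

End Silver.

Theorem lemma8 (R : realType) (k : nat) (hk : (1 <= k)%N) :
  size (c_seq R k) = (2 ^ k - 1)%N /\
  \sum_(x <- c_seq R k) x = 2 * (rho R ^+ k - 1) /\
  (forall j : nat, (j < 2 ^ k - 1)%N ->
     nth 0 (pi_seq R k) j <= nth 0 (c_seq R k) j).
Proof.
case: k hk => // k _.
split; first exact: size_c_seq.
split; first exact: sum_c_seq.
by move=> j _; apply: pi_seq_le_c_seq.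
Qed.
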